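(* Consider the upper half-space model $\mathbb{H}^3=\{(x_1,x_2,x_3)\in\mathbb{R}^3: x_3>0\}$ with metric $g=\frac{1}{x_3^2}(dx_1^2+dx_2^2+dx_3^2)$. Let $E$ be a complete, non-parabolic end of revolution in $\mathbb{H}^3$ about the $x_3$-axis. Then $\inf_{p\in E}x_3(p)=0$.
   Context: A complete end of revolution about the $x_3$-axis is the set $E=\{(\gamma_1(s)\cos\theta,\gamma_1(s)\sin\theta,\gamma_2(s)): s\ge0,\ \theta\in[0,2\pi)\}$, where $\gamma(s)=(\gamma_1(s),0,\gamma_2(s))$, $s\in[0,\infty)$, is a smooth regular curve with $\gamma_1>0$, $\gamma_2>0$ and infinite hyperbolic length; $E$ carries the induced metric. An end $E$ is parabolic if every bounded harmonic function on $E$ is determined by its boundary values; otherwise it is non-parabolic. *)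

From Stdlib Require Import Reals.
From Coquelicot Require Import Coquelicot.
Open Scope R_scope.

Definition pd1 (f : R -> R -> R) (s t : R) : R := Derive (fun x => f x t) s.
Definition pd2 (f : R -> R -> R) (s t : R) : R := Derive (fun y => f s y) t.

Definition smooth (f : R -> R) : Prop := forall n x, ex_derive_n f n x.

Definition pt3 := (R * R * R)%type.
Definition x3 (p : pt3) : R := let '(_, _, c) := p in c.

(* Parametrization of the end of revolution generated by
   gamma = (g1, 0, g2):  X(s,theta) = (g1 s cos theta, g1 s sin theta, g2 s). *)
Definition Xrev (g1 g2 : R -> R) (s th : R) : pt3 :=
  (g1 s * cos th, g1 s * sin th, g2 s).

Definition hypmetric (p v w : pt3) : R :=
  let '(v1, v2, v3) := v in let '(w1, w2, w3) := w in
  (v1 * w1 + v2 * w2 + v3 * w3) / (x3 p ^ 2).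

Definition Xs (g1 g2 : R -> R) (s th : R) : pt3 :=
  (pd1 (fun a b => g1 a * cos b) s th,
   pd1 (fun a b => g1 a * sin b) s th,
   pd1 (fun a b => g2 a) s th).
Definition Xth (g1 g2 : R -> R) (s th : R) : pt3 :=
  (pd2 (fun a b => g1 a * cos b) s th,
   pd2 (fun a b => g1 a * sin b) s th,
   pd2 (fun a b => g2 a) s th).

Definition gss g1 g2 s th := hypmetric (Xrev g1 g2 s th) (Xs g1 g2 s th) (Xs g1 g2 s th).
Definition gst g1 g2 s th := hypmetric (Xrev g1 g2 s th) (Xs g1 g2 s th) (Xth g1 g2 s th).
Definition gtt g1 g2 s th := hypmetric (Xrev g1 g2 s th) (Xth g1 g2 s th) (Xth g1 g2 s th).
Definition gdet g1 g2 s th := gss g1 g2 s th * gtt g1 g2 s th - gst g1 g2 s th ^ 2.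

(* Laplace-Beltrami operator of the induced metric:
   Delta u = |g|^{-1/2} d_i ( |g|^{1/2} g^{ij} d_j u ). *)
Definition LapBel (g1 g2 : R -> R) (u : R -> R -> R) (s th : R) : R :=
  / sqrt (gdet g1 g2 s th) *
  ( pd1 (fun a b => sqrt (gdet g1 g2 a b) *
           ((gtt g1 g2 a b / gdet g1 g2 a b) * pd1 u a b
            - (gst g1 g2 a b / gdet g1 g2 a b) * pd2 u a b)) s th
  + pd2 (fun a b => sqrt (gdet g1 g2 a b) *
           (- (gst g1 g2 a b / gdet g1 g2 a b) * pd1 u a b
            + (gss g1 g2 a b / gdet g1 g2 a b) * pd2 u a b)) s th ).

Definition cont2 (f : R -> R -> R) (s t : R) : Prop :=
  continuous (fun p : R * R => f (fst p) (snd p)) (s, t).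

(* u is C^2 at (s,t) (with the assumption holding on an open set). *)
Definition C2_at (u : R -> R -> R) (s t : R) : Prop :=
  ex_derive (fun x => u x t) s /\ ex_derive (fun y => u s y) t /\
  ex_derive (fun x => pd1 u x t) s /\ ex_derive (fun y => pd1 u s y) t /\
  ex_derive (fun x => pd2 u x t) s /\ ex_derive (fun y => pd2 u s y) t /\
  cont2 u s t /\ cont2 (pd1 u) s t /\ cont2 (pd2 u) s t /\
  cont2 (pd1 (pd1 u)) s t /\ cont2 (pd2 (pd1 u)) s t /\
  cont2 (pd1 (pd2 u)) s t /\ cont2 (pd2 (pd2 u)) s t.

(* A function on E, in coordinates (s,theta), s >= 0, 2pi-periodic in theta. *)
Definition bdd_harmonic_on_end (g1 g2 : R -> R) (u : R -> R -> R) : Prop :=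
  (forall s th, 0 <= s -> u s (th + 2 * PI) = u s th) /\
  (exists M, forall s th, 0 <= s -> Rabs (u s th) <= M) /\
  (forall s th, 0 <= s ->
     filterlim (fun p : R * R => u (fst p) (snd p))
       (within (fun p : R * R => 0 <= fst p) (locally (s, th)))
       (locally (u s th))) /\
  (forall s th, 0 < s -> C2_at u s th /\ LapBel g1 g2 u s th = 0).

Definition parabolic_end (g1 g2 : R -> R) : Prop :=
  forall u v, bdd_harmonic_on_end g1 g2 u -> bdd_harmonic_on_end g1 g2 v ->
    (forall th, u 0 th = v 0 th) ->
    forall s th, 0 <= s -> u s th = v s th.

Definition complete_end_of_revolution (g1 g2 : R -> R) : Prop :=
  smooth g1 /\ smooth g2 /\
  (forall s, 0 <= s -> (Derive g1 s) ^ 2 + (Derive g2 s) ^ 2 > 0) /\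
  (forall s, 0 <= s -> 0 < g1 s) /\
  (forall s, 0 <= s -> 0 < g2 s) /\
  (* infinite hyperbolic length *)
  (forall M : R, exists T, 0 <= T /\
     M < RInt (fun s => sqrt ((Derive g1 s) ^ 2 + (Derive g2 s) ^ 2) / g2 s) 0 T).

Definition end_set (g1 g2 : R -> R) (p : pt3) : Prop :=
  exists s th, 0 <= s /\ 0 <= th < 2 * PI /\ p = Xrev g1 g2 s th.

From Stdlib Require Import Reals Lra.
From Coquelicot Require Import Coquelicot.
Open Scope R_scope.

(* If x3 >= c > 0 on E, the end is parabolic.  In the coordinates (s, theta)
   the Laplace equation reads (P w_s)_s + Q w_thth = 0 with P = g1/|g'| and
   Q = |g'|/g1.  Let w be the difference of two bounded harmonic functions with
   the same boundary values and F(s) the integral of w^2 over a circle.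
   Integrating by parts in theta gives (P F')' = 2 int (P w_s^2 + Q w_th^2) >= 0.
   Were P F' = k > 0 somewhere, F would grow at least like k int ds/P, and
   int ds/P >= log (g1 0 + euclidean length), which is unbounded because
   x3 >= c makes the euclidean length at least c times the infinite hyperbolic
   length; this contradicts the boundedness of w.  Hence F is nonincreasing,
   tends to 0 at the boundary, and vanishes. *)

Lemma nondecreasing_of_derive_nonneg (f df : R -> R) a b : a <= b ->
  (forall x, a <= x <= b -> is_derive f x (df x)) ->
  (forall x, a <= x <= b -> 0 <= df x) -> f a <= f b.
Proof.
  intros Hab Hd Hpos.
  destruct (MVT_gen f a b df) as (c & Hc & E);
    rewrite ?Rmin_left, ?Rmax_right in * by lra.
  - intros x Hx. apply Hd; lra.
  - intros x Hx. apply continuity_pt_filterlim, (ex_derive_continuous f x).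
    eexists. apply Hd; lra.
  - assert (0 <= df c) by (apply Hpos; lra). nra.
Qed.

Lemma continuous_slice (f : R -> R -> R) x y :
  continuity_2d_pt f x y -> continuous (fun t => f x t) y.
Proof.
  intros H. apply (continuous_comp_2 (fun _ => x) (fun t => t) f).
  - apply continuous_const.
  - apply continuous_id.
  - apply continuity_2d_pt_filterlim, H.
Qed.

Lemma ex_RInt_slice (f : R -> R -> R) x a b :
  (forall t, continuity_2d_pt f x t) -> ex_RInt (fun t => f x t) a b.
Proof.
  intros H. apply (ex_RInt_continuous (V := R_CompleteNormedModule)).
  intros t _. apply continuous_slice, H.
Qed.

Lemma is_derive_RInt_param_loc (f df : R -> R -> R) a b x :
  locally x (fun y => forall t, is_derive (fun z => f z t) y (df y t)) ->
  locally x (fun y => forall t, continuity_2d_pt f y t) ->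
  (forall t, continuity_2d_pt df x t) ->
  is_derive (fun y => RInt (fun t => f y t) a b) x (RInt (fun t => df x t) a b).
Proof.
  intros Hd Hf Hdf.
  rewrite <- (RInt_ext (fun t => Derive (fun z => f z t) x)).
  2:{ intros t _. apply is_derive_unique. apply (locally_singleton _ _ Hd). }
  apply is_derive_RInt_param.
  - apply (filter_imp _ _ (fun y Hy t _ => ex_intro _ _ (Hy t)) Hd).
  - intros t _. apply (continuity_2d_pt_ext_loc df); [|apply Hdf].
    destruct Hd as [e He]. exists e. intros y z Hy _.
    symmetry. apply is_derive_unique, He, Hy.
  - apply (filter_imp _ _ (fun y Hy => ex_RInt_slice f y a b Hy) Hf).
Qed.

Lemma RInt_sqr_eq0 (f : R -> R) a b : a < b -> (forall t, continuous f t) ->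
  RInt (fun t => f t * f t) a b = 0 -> f a = 0.
Proof.
  intros Hab Hf Hint.
  destruct (Req_dec (f a) 0) as [E | E]; [exact E | exfalso].
  set (g := fun t => f t * f t) in Hint.
  assert (Hg : forall t, continuous g t).
  { intro t. apply (continuous_mult (K := R_AbsRing) f f); apply Hf. }
  assert (Hga : 0 < g a) by (unfold g; nra).
  destruct (Hg a _ (locally_ball (g a) (mkposreal (g a / 2) ltac:(lra)))) as [d Hd].
  set (e := Rmin (d / 2) (b - a)).
  assert (He : 0 < e) by (apply Rmin_pos; [pose proof (cond_pos d) | ]; lra).
  assert (e <= d / 2) by apply Rmin_l. assert (e <= b - a) by apply Rmin_r.
  assert (Hex : forall x y, ex_RInt g x y).
  { intros x y. apply (ex_RInt_continuous (V := R_CompleteNormedModule)). intros; apply Hg. }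
  assert (Hnear : 0 < RInt g a (a + e)).
  { apply RInt_gt_0; [lra | | intros; apply Hg].
    intros t Ht. assert (B : ball a d t).
    { change (Rabs (t - a) < d). rewrite Rabs_pos_eq by lra. pose proof (cond_pos d). lra. }
    specialize (Hd t B). change (Rabs (g t - g a) < g a / 2) in Hd.
    apply Rabs_lt_between in Hd. lra. }
  assert (Hfar : 0 <= RInt g (a + e) b).
  { apply RInt_ge_0; [lra | apply Hex | intros; unfold g; apply Rle_0_sqr]. }
  pose proof (RInt_Chasles g a (a + e) b (Hex _ _) (Hex _ _)) as Ch.
  rewrite Hint in Ch. unfold plus in Ch. simpl in Ch. lra.
Qed.

Lemma is_derive_periodic (f : R -> R) p t l :
  (forall y, f (y + p) = f y) -> is_derive f (t + p) l -> is_derive f t l.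
Proof.
  intros Hp Hd. apply (is_derive_ext (fun y => f (y + p))); [exact Hp |].
  replace l with (scal 1 l) by apply (scal_one (K := R_AbsRing)).
  apply (is_derive_comp f (fun y => y + p)); [exact Hd |].
  auto_derive; auto.
Qed.

(* Reflecting across s = 0 turns continuity up to the boundary into continuity
   on the whole plane, where uniform continuity on rectangles is available. *)
Lemma continuity_2d_pt_Rabs_of_within (z : R -> R -> R) x y :
  (forall s t, 0 <= s -> filterlim (fun p : R * R => z (fst p) (snd p))
     (within (fun p : R * R => 0 <= fst p) (locally (s, t))) (locally (z s t))) ->
  continuity_2d_pt (fun a b => z (Rabs a) b) x y.
Proof.
  intros Hz. apply continuity_2d_pt_filterlim.
  apply (filterlim_comp _ _ _ (fun p : R * R => (Rabs (fst p), snd p))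
    (fun q : R * R => z (fst q) (snd q)) _
    (within (fun p : R * R => 0 <= fst p) (locally (Rabs x, y)))).
  - assert (Hc : continuous (fun p : R * R => (Rabs (fst p), snd p)) (x, y)).
    { apply (continuous_comp_2 (fun p : R * R => Rabs (fst p)) snd pair).
      - apply (continuous_comp fst Rabs); [apply continuous_fst | apply continuous_Rabs].
      - apply continuous_snd.
      - apply (continuous_ext (fun q => q)); [intros []; reflexivity | apply continuous_id]. }
    intros P HP. apply (filter_imp _ _ (fun p Hp => Hp (Rabs_pos _)) (Hc _ HP)).
  - apply Hz, Rabs_pos.
Qed.

Lemma flux_nonpos_of_unbounded_potential (F I P H h : R -> R) B :
  (forall s, 0 < s -> is_derive F s (I s)) ->
  (forall a b, 0 < a <= b -> P a * I a <= P b * I b) ->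
  (forall s, 0 < s -> 0 < P s) ->
  (forall s, 0 < s -> is_derive H s (h s)) ->
  (forall s, 0 < s -> 0 <= h s <= / P s) ->
  (forall M, exists s, 0 < s /\ M < H s) ->
  (forall s, 0 < s -> F s <= B) ->
  forall s, 0 < s -> I s <= 0.
Proof.
  intros HF HPI HP HH Hh Hunb HB s0 Hs0.
  (* If k := P I > 0 at s0, then I >= k / P >= k h beyond s0, so F - k H is
     nondecreasing there and F is unbounded. *)
  apply Rnot_lt_le. intros HI0.
  set (k := P s0 * I s0).
  assert (Hk : 0 < k) by (apply Rmult_lt_0_compat; auto).
  assert (Hgrow : forall x, s0 <= x -> F s0 - k * H s0 <= F x - k * H x).
  { intros x Hx.
    apply (nondecreasing_of_derive_nonneg (fun y => F y - k * H y)
      (fun y => I y - k * h y)); auto.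
    - intros y Hy. apply (is_derive_minus F (fun y => k * H y)); [apply HF; lra|].
      apply (is_derive_scal H). apply HH; lra.
    - intros y Hy. assert (HPy : 0 < P y) by (apply HP; lra).
      assert (k <= P y * I y) by (apply HPI; lra).
      destruct (Hh y ltac:(lra)) as [_ Hhy].
      assert (k * h y <= k / P y) by (apply Rmult_le_compat_l; lra).
      assert (k / P y <= I y).
      { apply (Rmult_le_reg_l (P y)); auto. unfold Rdiv. rewrite <- Rmult_assoc,
          (Rmult_comm (P y) k), Rmult_assoc, Rinv_r, Rmult_1_r by lra. lra. }
      lra. }
  assert (Hmono : forall a b, 0 < a <= b -> H a <= H b).
  { intros a b Hab. apply (nondecreasing_of_derive_nonneg H h); try lra;
      intros y Hy; [apply HH | apply Hh]; lra. }
  destruct (Hunb (H s0 + (B - F s0) / k + 1)) as (x & Hx & HHx).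
  assert (Hxs : s0 <= x).
  { apply Rnot_lt_le. intros Hlt. assert (H x <= H s0) by (apply Hmono; lra).
    assert (0 <= (B - F s0) / k) by (apply Rdiv_le_0_compat; [pose proof (HB s0 Hs0)|]; lra).
    lra. }
  specialize (Hgrow x Hxs). specialize (HB x Hx).
  assert (k * ((B - F s0) / k + 1) < k * (H x - H s0)) by (apply Rmult_lt_compat_l; lra).
  assert (k * ((B - F s0) / k + 1) = B - F s0 + k) by (field; lra).
  lra.
Qed.

Lemma nonincreasing_nonneg_eq0 (F I : R -> R) :
  (forall s, 0 < s -> is_derive F s (I s)) ->
  (forall s, 0 < s -> I s <= 0) ->
  (forall s, 0 < s -> 0 <= F s) ->
  (forall eps, 0 < eps -> exists del, 0 < del /\ forall s, 0 < s < del -> F s <= eps) ->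
  forall s, 0 < s -> F s = 0.
Proof.
  intros HF HI Hpos Hsmall s Hs.
  assert (Hmono : forall a, 0 < a <= s -> F s <= F a).
  { intros a Ha. cut (- F a <= - F s); [lra|].
    apply (nondecreasing_of_derive_nonneg (fun y => - F y) (fun y => - I y)); try lra.
    - intros y Hy. apply (is_derive_opp F), HF. lra.
    - intros y Hy. assert (I y <= 0) by (apply HI; lra). lra. }
  specialize (Hpos s Hs).
  apply Rle_antisym; [apply Rnot_lt_le; intros HFs | exact Hpos].
  destruct (Hsmall (F s / 2) ltac:(lra)) as (del & Hdel & Hd).
  set (a := Rmin s del / 2).
  assert (0 < Rmin s del) by (apply Rmin_pos; lra).
  pose proof (Rmin_l s del). pose proof (Rmin_r s del).
  assert (F s <= F a) by (apply Hmono; unfold a; lra).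
  assert (F a <= F s / 2) by (apply Hd; unfold a; lra).
  lra.
Qed.

Lemma smooth_ex_derive (f : R -> R) x : smooth f -> ex_derive f x.
Proof. intros Hf. exact (Hf 1%nat x). Qed.

Lemma smooth_ex_derive_Derive (f : R -> R) x : smooth f -> ex_derive (Derive f) x.
Proof. intros Hf. exact (Hf 2%nat x). Qed.

Lemma smooth_continuous (f : R -> R) x : smooth f -> continuous f x.
Proof. intros Hf. exact (ex_derive_continuous f x (smooth_ex_derive f x Hf)). Qed.

Lemma smooth_Derive_continuous (f : R -> R) x : smooth f -> continuous (Derive f) x.
Proof. intros Hf. exact (ex_derive_continuous _ x (smooth_ex_derive_Derive f x Hf)). Qed.

Lemma sin2_cos2_pow th : sin th ^ 2 + cos th ^ 2 = 1.
Proof. rewrite <- (sin2_cos2 th). unfold Rsqr. ring. Qed.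

Definition speed2 (g1 g2 : R -> R) s := Derive g1 s ^ 2 + Derive g2 s ^ 2.
Definition radial_coef (g1 g2 : R -> R) s := g1 s / sqrt (speed2 g1 g2 s).
Definition angular_coef (g1 g2 : R -> R) s := sqrt (speed2 g1 g2 s) / g1 s.

Lemma Xs_eq g1 g2 s th :
  Xs g1 g2 s th = (Derive g1 s * cos th, Derive g1 s * sin th, Derive g2 s).
Proof. unfold Xs, pd1. rewrite !(Derive_scal_l g1). reflexivity. Qed.

Lemma Xth_eq g1 g2 s th : Xth g1 g2 s th = (- g1 s * sin th, g1 s * cos th, 0).
Proof.
  unfold Xth, pd2. rewrite (Derive_scal cos), (Derive_scal sin), Derive_const.
  rewrite (is_derive_unique _ _ _ (is_derive_cos th)).
  rewrite (is_derive_unique _ _ _ (is_derive_sin th)). f_equal. f_equal. ring.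
Qed.

Lemma gst_eq g1 g2 s th : gst g1 g2 s th = 0.
Proof. unfold gst. rewrite Xs_eq, Xth_eq. simpl. unfold Rdiv. ring. Qed.

Lemma gss_eq g1 g2 s th : gss g1 g2 s th = speed2 g1 g2 s / g2 s ^ 2.
Proof.
  unfold gss, speed2. rewrite Xs_eq. simpl. unfold Rdiv. f_equal.
  transitivity (Derive g1 s ^ 2 * (sin th ^ 2 + cos th ^ 2) + Derive g2 s ^ 2);
    [ring | rewrite sin2_cos2_pow; ring].
Qed.

Lemma gtt_eq g1 g2 s th : gtt g1 g2 s th = g1 s ^ 2 / g2 s ^ 2.
Proof.
  unfold gtt. rewrite Xth_eq. simpl. unfold Rdiv. f_equal.
  transitivity (g1 s ^ 2 * (sin th ^ 2 + cos th ^ 2));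
    [ring | rewrite sin2_cos2_pow; ring].
Qed.

Section MetricCoefficients.
Variables (g1 g2 : R -> R) (s th : R).
Hypotheses (g1_pos : 0 < g1 s) (g2_pos : 0 < g2 s) (speed2_pos : 0 < speed2 g1 g2 s).

Let sqrt_speed2_pos : 0 < sqrt (speed2 g1 g2 s).
Proof. apply sqrt_lt_R0, speed2_pos. Qed.

Let sqrt_speed2_sqr : sqrt (speed2 g1 g2 s) * sqrt (speed2 g1 g2 s) = speed2 g1 g2 s.
Proof. apply sqrt_sqrt; lra. Qed.

Lemma sqrt_gdet_eq : sqrt (gdet g1 g2 s th) = sqrt (speed2 g1 g2 s) * g1 s / g2 s ^ 2.
Proof.
  rewrite <- (sqrt_pow2 (sqrt (speed2 g1 g2 s) * g1 s / g2 s ^ 2)).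
  - f_equal. unfold gdet. rewrite gss_eq, gtt_eq, gst_eq.
    pose proof sqrt_speed2_sqr as E. set (r := sqrt (speed2 g1 g2 s)) in *.
    rewrite <- E. field. lra.
  - apply Rlt_le, Rdiv_lt_0_compat; [nra | apply pow_lt; lra].
Qed.

Lemma sqrt_gdet_neq0 : sqrt (gdet g1 g2 s th) <> 0.
Proof.
  rewrite sqrt_gdet_eq. apply Rgt_not_eq, Rdiv_lt_0_compat; [nra | apply pow_lt; lra].
Qed.

Lemma radial_flux_eq x y :
  sqrt (gdet g1 g2 s th) *
    (gtt g1 g2 s th / gdet g1 g2 s th * x - gst g1 g2 s th / gdet g1 g2 s th * y)
  = radial_coef g1 g2 s * x.
Proof.
  rewrite sqrt_gdet_eq. unfold gdet, radial_coef.
  rewrite gss_eq, gtt_eq, gst_eq.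
  pose proof sqrt_speed2_sqr as E. set (r := sqrt (speed2 g1 g2 s)) in *.
  rewrite <- E. field. lra.
Qed.

Lemma angular_flux_eq x y :
  sqrt (gdet g1 g2 s th) *
    (- (gst g1 g2 s th / gdet g1 g2 s th) * x + gss g1 g2 s th / gdet g1 g2 s th * y)
  = angular_coef g1 g2 s * y.
Proof.
  rewrite sqrt_gdet_eq. unfold gdet, angular_coef.
  rewrite gss_eq, gtt_eq, gst_eq.
  pose proof sqrt_speed2_sqr as E. set (r := sqrt (speed2 g1 g2 s)) in *.
  rewrite <- E. field. lra.
Qed.

End MetricCoefficients.

Lemma complete_end_pos g1 g2 s : complete_end_of_revolution g1 g2 -> 0 <= s ->
  0 < g1 s /\ 0 < g2 s /\ 0 < speed2 g1 g2 s.
Proof. intros (_ & _ & Hsp & Hg1 & Hg2 & _) Hs. repeat split; auto. apply Hsp, Hs. Qed.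

Lemma radial_coef_ex_derive g1 g2 s : smooth g1 -> smooth g2 -> 0 < speed2 g1 g2 s ->
  ex_derive (radial_coef g1 g2) s.
Proof.
  intros S1 S2 Hsp. unfold radial_coef, speed2 in *. simpl in Hsp.
  auto_derive. repeat split; auto using smooth_ex_derive, smooth_ex_derive_Derive.
  apply Rgt_not_eq, sqrt_lt_R0, Hsp.
Qed.

Lemma LapBel_rev g1 g2 u s th : complete_end_of_revolution g1 g2 -> 0 < s ->
  ex_derive (fun x => pd1 u x th) s ->
  LapBel g1 g2 u s th = / sqrt (gdet g1 g2 s th) *
    (Derive (radial_coef g1 g2) s * pd1 u s th + radial_coef g1 g2 s * pd1 (pd1 u) s th
     + angular_coef g1 g2 s * pd2 (pd2 u) s th).
Proof.
  intros HE Hs Hu. pose proof HE as (S1 & S2 & _).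
  assert (Hpos : forall x, 0 < x -> 0 < g1 x /\ 0 < g2 x /\ 0 < speed2 g1 g2 x)
    by (intros x Hx; apply complete_end_pos; auto; lra).
  unfold LapBel. f_equal. f_equal.
  - unfold pd1 at 1.
    rewrite (Derive_ext_loc _ (fun a => radial_coef g1 g2 a * pd1 u a th)).
    + apply Derive_mult; [|exact Hu].
      apply radial_coef_ex_derive; auto. apply Hpos, Hs.
    + apply (filter_imp (fun x => 0 < x)); [|exact (open_gt 0 s Hs)].
      intros x Hx. destruct (Hpos x Hx) as (? & ? & ?). apply radial_flux_eq; auto.
  - unfold pd2 at 1. destruct (Hpos s Hs) as (? & ? & ?).
    rewrite (Derive_ext _ (fun b => angular_coef g1 g2 s * pd2 u s b)).
    + apply Derive_scal.
    + intro b. apply angular_flux_eq; auto.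
Qed.

Lemma bdd_harmonic_radial_eq g1 g2 u s th : complete_end_of_revolution g1 g2 ->
  bdd_harmonic_on_end g1 g2 u -> 0 < s ->
  Derive (radial_coef g1 g2) s * pd1 u s th + radial_coef g1 g2 s * pd1 (pd1 u) s th
  + angular_coef g1 g2 s * pd2 (pd2 u) s th = 0.
Proof.
  intros HE (_ & _ & _ & Hharm) Hs.
  destruct (Hharm s th Hs) as [(_ & _ & Hu & _) HL].
  rewrite LapBel_rev in HL by assumption.
  apply Rmult_integral in HL as [HL | HL]; [exfalso | exact HL].
  destruct (complete_end_pos g1 g2 s HE) as (? & ? & ?); [lra|].
  revert HL. apply Rinv_neq_0_compat, sqrt_gdet_neq0; assumption.
Qed.

Section RadialEnergy.

Variables (P dP Q : R -> R) (w w_s w_t w_ss w_tt : R -> R -> R) (c : R).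

Hypothesis P_derive : forall s, 0 < s -> is_derive P s (dP s).
Hypothesis P_pos : forall s, 0 < s -> 0 < P s.
Hypothesis Q_pos : forall s, 0 < s -> 0 < Q s.
Hypothesis w_derive_s : forall s t, 0 < s -> is_derive (fun x => w x t) s (w_s s t).
Hypothesis w_s_derive_s : forall s t, 0 < s -> is_derive (fun x => w_s x t) s (w_ss s t).
Hypothesis w_derive_t : forall s t, 0 < s -> is_derive (fun y => w s y) t (w_t s t).
Hypothesis w_t_derive_t : forall s t, 0 < s -> is_derive (fun y => w_t s y) t (w_tt s t).
Hypothesis w_cont : forall s t, 0 < s -> continuity_2d_pt w s t.
Hypothesis w_s_cont : forall s t, 0 < s -> continuity_2d_pt w_s s t.
Hypothesis w_t_cont : forall s t, 0 < s -> continuity_2d_pt w_t s t.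
Hypothesis w_ss_cont : forall s t, 0 < s -> continuity_2d_pt w_ss s t.
Hypothesis w_tt_cont : forall s t, 0 < s -> continuity_2d_pt w_tt s t.
Hypothesis w_periodic : forall s t, 0 < s -> w s (t + 2 * PI) = w s t.
Hypothesis w_radial_eq : forall s t, 0 < s ->
  dP s * w_s s t + P s * w_ss s t + Q s * w_tt s t = 0.

Ltac cont2d := solve [repeat first
  [ apply continuity_2d_pt_const | apply continuity_2d_pt_plus
  | apply continuity_2d_pt_mult | eauto ]].

Ltac near_pos Hs y Hy :=
  apply (filter_imp (fun x => 0 < x)); [intros y Hy | exact (open_gt 0 _ Hs)].

Definition energy s := RInt (fun t => w s t * w s t) c (c + 2 * PI).
Definition energy_flux s := RInt (fun t => 2 * (w s t * w_s s t)) c (c + 2 * PI).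

Lemma is_derive_energy s : 0 < s -> is_derive energy s (energy_flux s).
Proof.
  intros Hs. unfold energy, energy_flux.
  apply (is_derive_RInt_param_loc (fun x t => w x t * w x t)
    (fun x t => 2 * (w x t * w_s x t))).
  - near_pos Hs y Hy. intros t.
    replace (2 * (w y t * w_s y t)) with (w_s y t * w y t + w y t * w_s y t) by ring.
    apply (is_derive_mult (fun z => w z t) (fun z => w z t)); auto using Rmult_comm.
  - near_pos Hs y Hy. intros t. cont2d.
  - intros t. cont2d.
Qed.

Definition energy_flux_derivative s :=
  RInt (fun t => 2 * (w_s s t * w_s s t + w s t * w_ss s t)) c (c + 2 * PI).

Lemma is_derive_energy_flux s : 0 < s -> is_derive energy_flux s (energy_flux_derivative s).
Proof.
  intros Hs. unfold energy_flux, energy_flux_derivative.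
  apply (is_derive_RInt_param_loc (fun x t => 2 * (w x t * w_s x t))
    (fun x t => 2 * (w_s x t * w_s x t + w x t * w_ss x t))).
  - near_pos Hs y Hy. intros t.
    apply (is_derive_scal (fun z => w z t * w_s z t)).
    apply (is_derive_mult (fun z => w z t) (fun z => w_s z t)); auto using Rmult_comm.
  - near_pos Hs y Hy. intros t. cont2d.
  - intros t. cont2d.
Qed.

Lemma w_t_periodic s t : 0 < s -> w_t s (t + 2 * PI) = w_t s t.
Proof.
  intros Hs.
  assert (Hshift : is_derive (fun y => w s y) t (w_t s (t + 2 * PI))).
  { apply (is_derive_periodic _ (2 * PI)); auto. }
  rewrite <- (is_derive_unique _ _ _ Hshift). apply is_derive_unique; auto.
Qed.

Lemma RInt_angular_by_parts s : 0 < s ->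
  RInt (fun t => w_t s t * w_t s t + w s t * w_tt s t) c (c + 2 * PI) = 0.
Proof.
  intros Hs. apply is_RInt_unique.
  replace 0 with (minus (w s (c + 2 * PI) * w_t s (c + 2 * PI)) (w s c * w_t s c))
    by (rewrite w_periodic, w_t_periodic by exact Hs; apply (minus_eq_zero (G := R_AbelianGroup))).
  apply (is_RInt_derive (fun t => w s t * w_t s t)).
  - intros t _. apply (is_derive_mult (fun y => w s y) (fun y => w_t s y)); auto using Rmult_comm.
  - intros t _. apply (continuous_slice (fun a b => w_t a b * w_t a b + w a b * w_tt a b)).
    cont2d.
Qed.

Lemma weighted_energy_flux_derivative_eq s : 0 < s ->
  dP s * energy_flux s + P s * energy_flux_derivative s
  = RInt (fun t => 2 * (P s * (w_s s t * w_s s t) + Q s * (w_t s t * w_t s t)))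
      c (c + 2 * PI).
Proof.
  intros Hs.
  assert (Hflux : is_RInt (fun t => 2 * (w s t * w_s s t)) c (c + 2 * PI) (energy_flux s)).
  { apply (RInt_correct (V := R_CompleteNormedModule)).
    apply (ex_RInt_slice (fun a b => 2 * (w a b * w_s a b))). intros t. cont2d. }
  assert (Hflux' : is_RInt (fun t => 2 * (w_s s t * w_s s t + w s t * w_ss s t))
                     c (c + 2 * PI) (energy_flux_derivative s)).
  { apply (RInt_correct (V := R_CompleteNormedModule)).
    apply (ex_RInt_slice (fun a b => 2 * (w_s a b * w_s a b + w a b * w_ss a b))).
    intros t. cont2d. }
  assert (Hparts : is_RInt (fun t => w_t s t * w_t s t + w s t * w_tt s t)
                     c (c + 2 * PI) 0).
  { rewrite <- (RInt_angular_by_parts s Hs).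
    apply (RInt_correct (V := R_CompleteNormedModule)).
    apply (ex_RInt_slice (fun a b => w_t a b * w_t a b + w a b * w_tt a b)).
    intros t. cont2d. }
  (* Adding 2 Q times the vanishing angular integral trades -2 Q w w_tt for 2 Q w_t^2. *)
  pose proof (is_RInt_plus _ _ _ _ _ _
    (is_RInt_plus _ _ _ _ _ _ (is_RInt_scal _ _ _ (dP s) _ Hflux)
                              (is_RInt_scal _ _ _ (P s) _ Hflux'))
    (is_RInt_scal _ _ _ (2 * Q s) _ Hparts)) as Hsum.
  symmetry. apply is_RInt_unique.
  replace (dP s * energy_flux s + P s * energy_flux_derivative s)
    with (plus (plus (scal (dP s) (energy_flux s)) (scal (P s) (energy_flux_derivative s)))
               (scal (2 * Q s) 0))
    by (unfold plus, scal; simpl; unfold mult; simpl; ring).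
  apply (is_RInt_ext _ _ _ _ _) with (2 := Hsum). intros t _.
  unfold plus, scal; simpl; unfold mult; simpl.
  transitivity (2 * (P s * (w_s s t * w_s s t) + Q s * (w_t s t * w_t s t))
    + 2 * w s t * (dP s * w_s s t + P s * w_ss s t + Q s * w_tt s t)); [ring|].
  rewrite w_radial_eq by exact Hs. ring.
Qed.

Lemma weighted_energy_flux_nondecreasing a b : 0 < a <= b ->
  P a * energy_flux a <= P b * energy_flux b.
Proof.
  intros Hab.
  apply (nondecreasing_of_derive_nonneg (fun x => P x * energy_flux x)
    (fun x => dP x * energy_flux x + P x * energy_flux_derivative x)); [lra | |].
  - intros x Hx. apply (is_derive_mult P energy_flux); auto using Rmult_comm.
    + apply P_derive. lra.
    + apply is_derive_energy_flux. lra.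
  - intros x Hx. assert (Hx0 : 0 < x) by lra.
    rewrite weighted_energy_flux_derivative_eq by exact Hx0.
    apply RInt_ge_0; [pose proof PI_RGT_0; lra | |].
    + apply (ex_RInt_slice
        (fun a b => 2 * (P x * (w_s a b * w_s a b) + Q x * (w_t a b * w_t a b)))).
      intros t. cont2d.
    + intros t _. assert (0 < P x) by (apply P_pos; lra).
      assert (0 < Q x) by (apply Q_pos; lra).
      pose proof (Rle_0_sqr (w_s x t)). pose proof (Rle_0_sqr (w_t x t)).
      unfold Rsqr in *. nra.
Qed.

Let ex_RInt_sqr s a b : 0 < s -> ex_RInt (fun t => w s t * w s t) a b.
Proof. intros Hs. apply (ex_RInt_slice (fun x t => w x t * w x t)). intros t. cont2d. Qed.

Lemma energy_nonneg s : 0 < s -> 0 <= energy s.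
Proof.
  intros Hs. apply RInt_ge_0; [pose proof PI_RGT_0; lra | auto |].
  intros t _. apply Rle_0_sqr.
Qed.

Lemma energy_le s M : 0 < s -> (forall t, Rabs (w s t) <= M) ->
  energy s <= 2 * PI * (M * M).
Proof.
  intros Hs HM. pose proof PI_RGT_0.
  replace (2 * PI * (M * M)) with (RInt (fun _ => M * M) c (c + 2 * PI)).
  2:{ rewrite (RInt_const (V := R_CompleteNormedModule)).
      unfold scal; simpl; unfold mult; simpl. ring. }
  apply RInt_le; [lra | auto | apply (ex_RInt_const (V := R_CompleteNormedModule)) |].
  intros t _. specialize (HM t). apply Rabs_le_between in HM. nra.
Qed.

Lemma energy_eq0 s : 0 < s -> energy s = 0 -> w s c = 0.
Proof.
  intros Hs. apply (RInt_sqr_eq0 (fun t => w s t)).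
  - pose proof PI_RGT_0. lra.
  - intros t. apply continuous_slice. auto.
Qed.

Lemma energy_small_near_boundary :
  (forall x y, continuity_2d_pt (fun a b => w (Rabs a) b) x y) ->
  (forall t, w 0 t = 0) ->
  forall eps, 0 < eps -> exists del, 0 < del /\ forall s, 0 < s < del -> energy s <= eps.
Proof.
  intros Hcont Hw0 eps Heps. pose proof PI_RGT_0.
  set (e := sqrt (eps / (2 * PI))).
  assert (He : 0 < e) by (apply sqrt_lt_R0, Rdiv_lt_0_compat; lra).
  destruct (uniform_continuity_2d (fun a b => w (Rabs a) b) (-1) 1 c (c + 2 * PI)
    (fun x y _ _ => Hcont x y) (mkposreal e He)) as [d Hd].
  exists (Rmin d 1). split; [apply Rmin_pos; [apply cond_pos | lra] |].
  intros s Hs. pose proof (Rmin_l d 1). pose proof (Rmin_r d 1).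
  assert (Hsmall : forall t, c <= t <= c + 2 * PI -> Rabs (w s t) <= e).
  { intros t Ht. specialize (Hd 0 t s t). simpl in Hd.
    rewrite Rabs_R0, (Rabs_pos_eq s), Hw0, Rminus_0_r, Rminus_0_r in Hd by lra.
    apply Rlt_le, Hd; try lra.
    - rewrite Rabs_pos_eq; lra.
    - rewrite Rminus_eq_0, Rabs_R0. apply cond_pos. }
  replace eps with (RInt (fun _ => e * e) c (c + 2 * PI)).
  2:{ rewrite (RInt_const (V := R_CompleteNormedModule)).
      unfold scal; simpl; unfold mult; simpl. unfold e. rewrite sqrt_sqrt.
      - field. lra.
      - apply Rlt_le, Rdiv_lt_0_compat; lra. }
  apply RInt_le; [lra | apply ex_RInt_sqr; lra
    | apply (ex_RInt_const (V := R_CompleteNormedModule)) |].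
  intros t Ht. specialize (Hsmall t ltac:(lra)). apply Rabs_le_between in Hsmall. nra.
Qed.

Lemma radial_solution_vanishes (H h : R -> R) :
  (forall s, 0 < s -> is_derive H s (h s)) ->
  (forall s, 0 < s -> 0 <= h s <= / P s) ->
  (forall M, exists s, 0 < s /\ M < H s) ->
  (exists M, forall s t, 0 < s -> Rabs (w s t) <= M) ->
  (forall x y, continuity_2d_pt (fun a b => w (Rabs a) b) x y) ->
  (forall t, w 0 t = 0) ->
  forall s, 0 < s -> w s c = 0.
Proof.
  intros HH Hh Hunb [M HM] Hcont Hw0 s Hs.
  apply energy_eq0; [exact Hs |].
  apply (nonincreasing_nonneg_eq0 energy energy_flux);
    [exact is_derive_energy | | exact energy_nonneg
    | exact (energy_small_near_boundary Hcont Hw0) | exact Hs].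
  apply (flux_nonpos_of_unbounded_potential energy energy_flux P H h (2 * PI * (M * M)));
    auto using is_derive_energy, weighted_energy_flux_nondecreasing.
  intros x Hx. apply energy_le; auto.
Qed.

End RadialEnergy.

Definition euclid_length (g1 g2 : R -> R) s := RInt (fun y => sqrt (speed2 g1 g2 y)) 0 s.
Definition log_potential (g1 g2 : R -> R) s := ln (g1 0 + euclid_length g1 g2 s).
Definition log_potential_derive (g1 g2 : R -> R) s :=
  sqrt (speed2 g1 g2 s) / (g1 0 + euclid_length g1 g2 s).

Section EuclideanLength.

Variables (g1 g2 : R -> R).
Hypothesis HE : complete_end_of_revolution g1 g2.

Let S1 : smooth g1. Proof. apply HE. Qed.
Let S2 : smooth g2. Proof. apply HE. Qed.

Lemma speed_continuous x : continuous (fun y => sqrt (speed2 g1 g2 y)) x.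
Proof.
  apply continuous_sqrt_comp. unfold speed2.
  apply (continuous_plus (K := R_AbsRing) (V := R_NormedModule)
    (fun y => Derive g1 y ^ 2) (fun y => Derive g2 y ^ 2)).
  - apply (continuous_ext (fun y => mult (Derive g1 y) (Derive g1 y)));
      [intros; unfold mult; simpl; ring|].
    apply (continuous_mult (K := R_AbsRing)); apply smooth_Derive_continuous, S1.
  - apply (continuous_ext (fun y => mult (Derive g2 y) (Derive g2 y)));
      [intros; unfold mult; simpl; ring|].
    apply (continuous_mult (K := R_AbsRing)); apply smooth_Derive_continuous, S2.
Qed.

Lemma is_derive_euclid_length s :
  is_derive (euclid_length g1 g2) s (sqrt (speed2 g1 g2 s)).
Proof.
  apply (is_derive_RInt (V := R_CompleteNormedModule)
    (fun y => sqrt (speed2 g1 g2 y)) _ 0 s); [|apply speed_continuous].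
  apply filter_forall. intros b. apply (RInt_correct (V := R_CompleteNormedModule)).
  apply (ex_RInt_continuous (V := R_CompleteNormedModule)). intros; apply speed_continuous.
Qed.

Lemma euclid_length_nonneg s : 0 <= s -> 0 <= euclid_length g1 g2 s.
Proof.
  intros Hs. apply RInt_ge_0; [exact Hs | | intros; apply sqrt_pos].
  apply (ex_RInt_continuous (V := R_CompleteNormedModule)). intros; apply speed_continuous.
Qed.

Lemma euclid_length_0 : euclid_length g1 g2 0 = 0.
Proof. apply (RInt_point (V := R_CompleteNormedModule)). Qed.

Lemma g1_le_euclid_length s : 0 <= s -> g1 s <= g1 0 + euclid_length g1 g2 s.
Proof.
  intros Hs.
  cut (g1 0 - g1 0 + euclid_length g1 g2 0 <= g1 0 - g1 s + euclid_length g1 g2 s);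
    [rewrite euclid_length_0; lra|].
  apply (nondecreasing_of_derive_nonneg
    (fun x => g1 0 - g1 x + euclid_length g1 g2 x)
    (fun x => sqrt (speed2 g1 g2 x) - Derive g1 x)); [exact Hs | |].
  - intros x _.
    replace (sqrt (speed2 g1 g2 x) - Derive g1 x)
      with (0 - Derive g1 x + sqrt (speed2 g1 g2 x)) by ring.
    apply (is_derive_plus (fun x => g1 0 - g1 x)); [|apply is_derive_euclid_length].
    apply (is_derive_minus (fun _ => g1 0) g1);
      [apply (is_derive_const (K := R_AbsRing) (V := R_NormedModule))|].
    apply Derive_correct, smooth_ex_derive, S1.
  - intros x _. cut (Derive g1 x <= sqrt (speed2 g1 g2 x)); [lra|].
    apply (Rle_trans _ (Rabs (Derive g1 x))); [apply Rle_abs|].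
    rewrite <- sqrt_Rsqr_abs. apply sqrt_le_1_alt. unfold speed2, Rsqr.
    pose proof (pow2_ge_0 (Derive g2 x)). simpl. lra.
Qed.

Lemma euclid_length_unbounded c : 0 < c -> (forall s, 0 <= s -> c <= g2 s) ->
  forall M, exists T, 0 < T /\ M < euclid_length g1 g2 T.
Proof.
  intros Hc Hg2 M. destruct HE as (_ & _ & _ & _ & Hg2pos & Hinf).
  destruct (Hinf (Rmax M 0 / c)) as (T & HT & Hhyp).
  set (hyp := fun s => sqrt (speed2 g1 g2 s) / g2 s) in Hhyp.
  assert (Hex : ex_RInt hyp 0 T).
  { apply (ex_RInt_continuous (V := R_CompleteNormedModule)). intros z Hz.
    rewrite Rmin_left, Rmax_right in Hz by lra.
    apply (continuous_mult (K := R_AbsRing) (fun y => sqrt (speed2 g1 g2 y)) (fun y => / g2 y));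
      [apply speed_continuous|].
    apply continuous_Rinv_comp; [apply smooth_continuous, S2|].
    apply Rgt_not_eq, Hg2pos. lra. }
  assert (Hcomp : c * RInt hyp 0 T <= euclid_length g1 g2 T).
  { rewrite <- (RInt_scal (V := R_CompleteNormedModule) hyp) by exact Hex.
    apply RInt_le; [exact HT | apply (ex_RInt_scal (V := R_CompleteNormedModule)), Hex | |].
    - apply (ex_RInt_continuous (V := R_CompleteNormedModule)). intros; apply speed_continuous.
    - intros x Hx. assert (c <= g2 x) by (apply Hg2; lra).
      unfold scal, hyp; simpl; unfold mult; simpl.
      unfold Rdiv. rewrite <- Rmult_assoc, (Rmult_comm c), Rmult_assoc.
      rewrite <- (Rmult_1_r (sqrt (speed2 g1 g2 x))) at 2.
      apply Rmult_le_compat_l; [apply sqrt_pos|].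
      apply (Rmult_le_reg_l (g2 x)); [lra|]. rewrite <- Rmult_assoc, Rinv_r_simpl_m; lra. }
  assert (Hbig : Rmax M 0 < c * RInt hyp 0 T).
  { apply (Rmult_lt_compat_l c) in Hhyp; [|exact Hc].
    unfold Rdiv in Hhyp. rewrite <- Rmult_assoc, Rinv_r_simpl_m in Hhyp by lra. exact Hhyp. }
  pose proof (Rmax_l M 0). pose proof (Rmax_r M 0).
  exists T. split; [|lra].
  destruct HT as [HT | <-]; [exact HT|]. rewrite euclid_length_0 in Hcomp. lra.
Qed.

Let log_arg_pos s : 0 <= s -> 0 < g1 0 + euclid_length g1 g2 s.
Proof.
  intros Hs. pose proof (euclid_length_nonneg s Hs).
  destruct (complete_end_pos g1 g2 0 HE) as [? _]; lra.
Qed.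

Lemma is_derive_log_potential s : 0 <= s ->
  is_derive (log_potential g1 g2) s (log_potential_derive g1 g2 s).
Proof.
  intros Hs. unfold log_potential, log_potential_derive.
  replace (sqrt (speed2 g1 g2 s) / (g1 0 + euclid_length g1 g2 s))
    with (scal (sqrt (speed2 g1 g2 s)) (/ (g1 0 + euclid_length g1 g2 s)))
    by (unfold scal; simpl; unfold mult; simpl; unfold Rdiv; ring).
  apply (is_derive_comp ln (fun x => g1 0 + euclid_length g1 g2 x)).
  - apply is_derive_ln, log_arg_pos, Hs.
  - replace (sqrt (speed2 g1 g2 s)) with (plus zero (sqrt (speed2 g1 g2 s)))
      by apply (plus_zero_l (G := R_AbelianGroup)).
    apply (is_derive_plus (fun _ => g1 0)); [|apply is_derive_euclid_length].
    apply (is_derive_const (K := R_AbsRing) (V := R_NormedModule)).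
Qed.

Lemma log_potential_derive_bound s : 0 <= s ->
  0 <= log_potential_derive g1 g2 s <= / radial_coef g1 g2 s.
Proof.
  intros Hs. unfold log_potential_derive, radial_coef.
  pose proof (log_arg_pos s Hs). pose proof (g1_le_euclid_length s Hs).
  destruct (complete_end_pos g1 g2 s HE Hs) as (Hg1 & _ & Hsp).
  pose proof (sqrt_lt_R0 _ Hsp).
  split; [apply Rdiv_le_0_compat; lra|].
  rewrite Rinv_div. unfold Rdiv. apply Rmult_le_compat_l; [lra|].
  apply Rinv_le_contravar; lra.
Qed.

Lemma log_potential_unbounded c : 0 < c -> (forall s, 0 <= s -> c <= g2 s) ->
  forall M, exists s, 0 < s /\ M < log_potential g1 g2 s.
Proof.
  intros Hc Hg2 M.
  destruct (euclid_length_unbounded c Hc Hg2 (exp M)) as (T & HT & HL).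
  exists T. split; [exact HT|]. unfold log_potential.
  rewrite <- (ln_exp M) at 1. apply ln_increasing; [apply exp_pos|].
  destruct (complete_end_pos g1 g2 0 HE) as [? _]; lra.
Qed.

End EuclideanLength.

Lemma C2_at_is_derive u s t : C2_at u s t ->
  is_derive (fun x => u x t) s (pd1 u s t) /\ is_derive (fun y => u s y) t (pd2 u s t) /\
  is_derive (fun x => pd1 u x t) s (pd1 (pd1 u) s t) /\
  is_derive (fun y => pd2 u s y) t (pd2 (pd2 u) s t).
Proof.
  intros (D1 & D2 & D11 & _ & _ & D22 & _).
  repeat split; apply Derive_correct; assumption.
Qed.

Lemma C2_at_continuity u s t : C2_at u s t ->
  continuity_2d_pt u s t /\ continuity_2d_pt (pd1 u) s t /\ continuity_2d_pt (pd2 u) s t /\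
  continuity_2d_pt (pd1 (pd1 u)) s t /\ continuity_2d_pt (pd2 (pd2 u)) s t.
Proof.
  intros (_ & _ & _ & _ & _ & _ & C & C1 & C2 & C11 & _ & _ & C22).
  repeat split; apply continuity_2d_pt_filterlim; assumption.
Qed.

Lemma radial_coef_pos g1 g2 s : complete_end_of_revolution g1 g2 -> 0 <= s ->
  0 < radial_coef g1 g2 s.
Proof.
  intros HE Hs. destruct (complete_end_pos g1 g2 s HE Hs) as (? & _ & ?).
  apply Rdiv_lt_0_compat, sqrt_lt_R0; assumption.
Qed.

Lemma angular_coef_pos g1 g2 s : complete_end_of_revolution g1 g2 -> 0 <= s ->
  0 < angular_coef g1 g2 s.
Proof.
  intros HE Hs. destruct (complete_end_pos g1 g2 s HE Hs) as (? & _ & ?).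
  apply Rdiv_lt_0_compat; [apply sqrt_lt_R0|]; assumption.
Qed.

Lemma parabolic_of_x3_bounded_below g1 g2 c :
  complete_end_of_revolution g1 g2 -> 0 < c -> (forall s, 0 <= s -> c <= g2 s) ->
  parabolic_end g1 g2.
Proof.
  intros HE Hc Hg2 u v Hu Hv Hb s th Hs.
  destruct Hs as [Hs | <-]; [|apply Hb].
  cut (u s th - v s th = 0); [lra|].
  pose proof HE as (S1 & S2 & _).
  pose proof Hu as (Hu_per & [Mu HMu] & Hu_bdry & Hu_harm).
  pose proof Hv as (Hv_per & [Mv HMv] & Hv_bdry & Hv_harm).
  assert (Hreg : forall x t, 0 < x -> C2_at u x t /\ C2_at v x t).
  { intros x t Hx. split; [apply Hu_harm | apply Hv_harm]; exact Hx. }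
  pose proof (radial_solution_vanishes (radial_coef g1 g2) (Derive (radial_coef g1 g2))
    (angular_coef g1 g2) (fun a b => u a b - v a b) (fun a b => pd1 u a b - pd1 v a b)
    (fun a b => pd2 u a b - pd2 v a b) (fun a b => pd1 (pd1 u) a b - pd1 (pd1 v) a b)
    (fun a b => pd2 (pd2 u) a b - pd2 (pd2 v) a b) th) as Hvanish.
  cbv beta in Hvanish.
  apply Hvanish with (H := log_potential g1 g2) (h := log_potential_derive g1 g2);
    clear Hvanish; try (intros x t Hx; destruct (Hreg x t Hx) as [Cu Cv];
      apply C2_at_is_derive in Cu as Du; apply C2_at_is_derive in Cv as Dv;
      apply C2_at_continuity in Cu; apply C2_at_continuity in Cv;
      first [apply (is_derive_minus (V := R_NormedModule)) | apply continuity_2d_pt_minus];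
      tauto).
  - intros x Hx. apply Derive_correct, radial_coef_ex_derive; auto.
    apply complete_end_pos; auto; lra.
  - intros x Hx. apply radial_coef_pos; auto; lra.
  - intros x Hx. apply angular_coef_pos; auto; lra.
  - intros x t Hx. rewrite Hu_per, Hv_per by lra. reflexivity.
  - intros x t Hx.
    pose proof (bdd_harmonic_radial_eq g1 g2 u x t HE Hu Hx).
    pose proof (bdd_harmonic_radial_eq g1 g2 v x t HE Hv Hx). lra.
  - intros x Hx. apply is_derive_log_potential; auto; lra.
  - intros x Hx. apply log_potential_derive_bound; auto; lra.
  - exact (log_potential_unbounded g1 g2 HE c Hc Hg2).
  - exists (Mu + Mv). intros x t Hx.
    specialize (HMu x t ltac:(lra)). specialize (HMv x t ltac:(lra)).
    eapply Rle_trans; [apply Rabs_triang | rewrite Rabs_Ropp; lra].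
  - intros x y.
    apply (continuity_2d_pt_minus (fun a b => u (Rabs a) b) (fun a b => v (Rabs a) b));
      apply continuity_2d_pt_Rabs_of_within; assumption.
  - intros t. rewrite Hb. ring.
  - exact Hs.
Qed.

Lemma end_set_x3 g1 g2 y :
  (exists p, end_set g1 g2 p /\ y = x3 p) <-> exists s, 0 <= s /\ y = g2 s.
Proof.
  split.
  - intros (p & (s & th & Hs & _ & ->) & ->). exists s. split; [exact Hs | reflexivity].
  - intros (s & Hs & ->). exists (Xrev g1 g2 s 0). split; [|reflexivity].
    exists s, 0. pose proof PI_RGT_0. repeat split; auto; lra.
Qed.

Theorem corollaryE (g1 g2 : R -> R) :
  complete_end_of_revolution g1 g2 ->
  ~ parabolic_end g1 g2 ->
  Glb_Rbar (fun y => exists p, end_set g1 g2 p /\ y = x3 p) = Finite 0.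
Proof.
  intros HE Hnp.
  set (S := fun y => exists p, end_set g1 g2 p /\ y = x3 p).
  destruct (Glb_Rbar_correct S) as [Hlb Hglb].
  assert (Hge0 : Rbar_le 0 (Glb_Rbar S)).
  { apply Hglb. intros y (s & Hs & ->)%end_set_x3.
    apply Rlt_le, (complete_end_pos g1 g2 s HE Hs). }
  assert (Hle : forall s, 0 <= s -> Rbar_le (Glb_Rbar S) (g2 s)).
  { intros s Hs. apply Hlb, end_set_x3. exists s. split; [exact Hs | reflexivity]. }
  pose proof (Hle 0 (Rle_refl 0)) as Hle0.
  destruct (Glb_Rbar S) as [r | |]; simpl in Hge0, Hle0; try contradiction.
  f_equal. destruct Hge0 as [Hr | <-]; [exfalso | reflexivity].
  apply Hnp, (parabolic_of_x3_bounded_below g1 g2 r HE Hr), Hle.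
Qed.
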